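(* Let $p\ge 1$ and $q\ge 0$ be integers and let $u$ be the unique integer in the interval $[p,p+q]$ maximizing $v_2(u)$. Then $$v_2\Big(\sum_{i=0}^{q}\frac{\binom{q}{i}}{p+i}\Big)=v_2\Big(\frac{\binom{q}{u-p}}{u}\Big).$$
   Context: For a nonzero rational number $x=2^m a/b$ with $a,b$ odd integers, $v_2(x)=m$ is its $2$-adic valuation. *)

From mathcomp Require Import all_boot all_order all_algebra.
Set Implicit Arguments. Unset Strict Implicit. Unset Printing Implicit Defensive.
Import Order.TTheory GRing.Theory Num.Theory.
Local Open Scope ring_scope.

(* 2-adic valuation of a rational number x = 2^m a/b (a, b odd):
   v2 x = m.  Convention v2 0 = 0 (never used on 0 in the main theorem). *)
Definition v2 (x : rat) : int :=
  (Posz (logn 2 `|numq x|%N) - Posz (logn 2 `|denq x|%N))%R.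

From mathcomp Require Import all_boot all_order all_algebra.
From mathcomp Require Import zify ring.
Import Order.TTheory GRing.Theory Num.Theory.

Set Implicit Arguments.
Unset Strict Implicit.
Unset Printing Implicit Defensive.

(* The sum has the closed form
     S(p, q) = (-1)^q A(p + q, q) / (p * C(p + q, p)),  A(n, q) = sum_(r <= q) (-2)^r C(n, r),
   proved by checking that both sides satisfy
     p S(p, q + 1) + (q + 1) S(p + 1, q) = 2^(q + 1).
   Since A is odd, v2 S = - v2 (p C(p + q, p)).  Writing u = p + j and p + q = u + m,
     p C(p + q, p) C(q, j) = u C(u - 1, j) C(u + m, m),
   and maximality of v2 u in [p, p + q] forces j, m < 2^(v2 u); adding or subtracting
   such a small number to a multiple of 2^(v2 u) does not change its valuation, so
   both binomial coefficients on the right are odd. *)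

Section PrimeValuation.

Variable p : nat.
Hypothesis p_pr : prime p.

Lemma logn_ltn_expn k t : (0 < t)%N -> (t < p ^ k)%N -> (logn p t < k)%N.
Proof.
move=> t_gt0 lt_tk; rewrite -(ltn_exp2l _ _ (prime_gt1 p_pr)).
by apply: leq_ltn_trans lt_tk; apply: dvdn_leq => //; apply: pfactor_dvdnn.
Qed.

Lemma dvdn_pfactor_logn_small k t u :
  (p ^ k %| u)%N -> (0 < t)%N -> (t < p ^ k)%N -> (p ^ (logn p t).+1 %| u)%N.
Proof.
by move=> dvd_u t_gt0 lt_tk; apply: dvdn_trans dvd_u; rewrite dvdn_exp2l ?logn_ltn_expn.
Qed.

Lemma logn_addr_pfactor a b :
  (0 < a)%N -> (p ^ (logn p a).+1 %| b)%N -> logn p (a + b) = logn p a.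
Proof.
move=> a_gt0 dvd_b; have ab_gt0 : (0 < a + b)%N by rewrite addn_gt0 a_gt0.
have dvd_b' : (p ^ logn p a %| b)%N by apply: dvdn_trans dvd_b; apply: dvdn_exp2l.
apply/eqP; rewrite eqn_leq leqNgt -!pfactor_dvdn //.
by rewrite !dvdn_addl // pfactor_dvdnn pfactor_dvdn // ltnn.
Qed.

Lemma logn_subr_pfactor a b : (0 < a)%N -> (a < b)%N ->
  (p ^ (logn p a).+1 %| b)%N -> logn p (b - a) = logn p a.
Proof.
move=> a_gt0 lt_ab dvd_b; have ba_gt0 : (0 < b - a)%N by rewrite subn_gt0.
have dvd_ba : (p ^ logn p a %| b - a)%N.
  by rewrite dvdn_sub ?pfactor_dvdnn //; apply: dvdn_trans dvd_b; apply: dvdn_exp2l.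
have ndvd_ba : ~~ (p ^ (logn p a).+1 %| b - a)%N.
  apply/negP => /(dvdn_sub dvd_b).
  by rewrite subKn ?(ltnW lt_ab) // pfactor_dvdn // ltnn.
by apply/eqP; rewrite eqn_leq leqNgt -!pfactor_dvdn // ndvd_ba dvd_ba.
Qed.

Lemma logn_bin_add_small k u m :
  (p ^ k %| u)%N -> (m < p ^ k)%N -> logn p 'C(u + m, m) = 0%N.
Proof.
move=> dvd_u; elim: m => [|m IHm] lt_mk; first by rewrite bin0 logn1.
have e : logn p (u + m.+1) = logn p m.+1.
  by rewrite addnC logn_addr_pfactor // (dvdn_pfactor_logn_small dvd_u).
have := congr1 (logn p) (mul_bin_diag (u + m).+1 m) => /=.
rewrite !lognM ?bin_gt0 ?ltnS ?leq_addl // -addnS e IHm ?(ltnW lt_mk) //; lia.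
Qed.

Lemma logn_bin_pred_small k u j :
  (p ^ k %| u)%N -> (j < p ^ k)%N -> logn p 'C(u.-1, j) = 0%N.
Proof.
move=> dvd_u; elim: j => [|j IHj] lt_jk; first by rewrite bin0 logn1.
have [lt_ju | le_uj] := ltnP j.+1 u; last by rewrite bin_small ?logn0 //; lia.
have e : logn p (u.-1 - j) = logn p j.+1.
  have -> : (u.-1 - j = u - j.+1)%N by lia.
  by rewrite logn_subr_pfactor // (dvdn_pfactor_logn_small dvd_u).
have := congr1 (logn p) (mul_bin_left u.-1 j).
rewrite !lognM ?bin_gt0 ?subn_gt0 // ?e ?IHj ?(ltnW lt_jk) //; lia.
Qed.

Lemma logn_argmax_window a b u : (0 < a)%N -> (a <= u <= b)%N ->
  (forall w, (a <= w <= b)%N -> w != u -> (logn p w < logn p u)%N) ->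
  (u - a < p ^ logn p u)%N /\ (b - u < p ^ logn p u)%N.
Proof.
move=> a_gt0 /andP[le_au le_ub] u_max; set k := logn p u.
have pk_gt0 : (0 < p ^ k)%N by rewrite expn_gt0 prime_gt0.
have mult_eq_u w : (a <= w <= b)%N -> (p ^ k %| w)%N -> w = u.
  move=> w_in; apply: contraTeq => w_ne_u.
  by rewrite pfactor_dvdn -?ltnNge ?u_max //; lia.
split; rewrite ltnNge; apply/negP => le_k.
- have := mult_eq_u (u - p ^ k); rewrite dvdn_sub ?dvdnn ?pfactor_dvdnn //; lia.
- have := mult_eq_u (u + p ^ k); rewrite dvdn_add ?dvdnn ?pfactor_dvdnn //; lia.
Qed.

End PrimeValuation.

Lemma bin_fact_addl x y : ('C(x + y, x) * (x`! * y`!) = (x + y)`!)%N.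
Proof. by rewrite -{2}(addKn x y) bin_fact ?leq_addr. Qed.

Lemma bin_fact_addr x y : ('C(x + y, y) * (x`! * y`!) = (x + y)`!)%N.
Proof. by rewrite addnC mulnC [(x`! * _)%N]mulnC mulnC bin_fact_addl. Qed.

Lemma mul_bin_window p j m : (0 < p)%N ->
  (p * 'C(p + (j + m), p) * 'C(j + m, j)
   = (p + j) * 'C((p + j).-1, j) * 'C(p + j + m, m))%N.
Proof.
case: p => // a _; apply/eqP.
rewrite -(@eqn_pmul2r (a`! * j`! * m`!)) ?muln_gt0 ?fact_gt0 //; apply/eqP.
transitivity ((a.+1 + (j + m))`!).
  by rewrite -bin_fact_addl -[(j + m)`!]bin_fact_addl factS; ring.
by rewrite addnA -bin_fact_addr !addSn factS -bin_fact_addr; ring.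
Qed.

Local Open Scope ring_scope.

Definition neg2_bin_sum (n q : nat) : int := \sum_(0 <= r < q.+1) (-2) ^+ r * 'C(n, r)%:Z.

Lemma neg2_bin_sum_odd n q : odd `|neg2_bin_sum n q|%N.
Proof.
have -> : neg2_bin_sum n q = 1 + 2 * - \sum_(0 <= r < q) (-2) ^+ r * 'C(n, r.+1)%:Z.
  rewrite /neg2_bin_sum big_nat_recl // expr0 bin0 mul1r mulrN -mulNr big_distrr /=.
  by congr (_ + _); apply: eq_bigr => r _; rewrite exprS mulrA.
rewrite -[odd _]negbK -dvdn2 -[2%N]/(`|2%:Z|%N) -dvdzE.
by rewrite rpredDr ?dvdz1 ?dvdz_mulr.
Qed.

Lemma neg2_bin_sum_signS n q :
  (-1) ^+ q.+1 * neg2_bin_sum n q.+1 + (-1) ^+ q * neg2_bin_sum n q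
  = 2 ^+ q.+1 * 'C(n, q.+1)%:Z.
Proof.
have sign_neg2 : (-1) ^+ q.+1 * (-2) ^+ q.+1 = 2 ^+ q.+1 :> int.
  by rewrite -exprMn mulrNN mul1r.
rewrite /neg2_bin_sum big_nat_recr //= mulrDr mulrA sign_neg2 addrAC.
by rewrite exprS mulN1r mulNr addNr add0r.
Qed.

Section ReciprocalBinomialSum.

Variable F : numFieldType.

Definition recip_bin_sum (p q : nat) : F :=
  \sum_(0 <= i < q.+1) 'C(q, i)%:R / (p + i)%:R.

Definition recip_bin_closed (p q : nat) : F :=
  ((-1) ^+ q * neg2_bin_sum (p + q) q)%:~R / (p * 'C(p + q, p))%:R.

Lemma sum_bin_natr n : \sum_(0 <= i < n.+1) 'C(n, i)%:R = 2 ^+ n :> F.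
Proof.
by rewrite big_mkord -[2]/(1 + 1 : F) exprD1n; apply: eq_bigr => i _; rewrite expr1n.
Qed.

Lemma recip_bin_sumS p q : (0 < p)%N ->
  p%:R * recip_bin_sum p q.+1 + q.+1%:R * recip_bin_sum p.+1 q = 2 ^+ q.+1.
Proof.
move=> p_gt0; rewrite /recip_bin_sum -sum_bin_natr big_nat_recl // [RHS]big_nat_recl //.
rewrite addn0 !bin0 mulrDr mul1r mulfV ?pnatr_eq0 -?lt0n // !mulr_sumr -addrA -big_split /=.
congr (_ + _); apply: eq_bigr => i _.
rewrite !mulrA -!natrM mul_bin_diag -addSnnS -mulrDl -natrD -mulnDl.
by rewrite natrM addSnnS mulrAC mulfV ?mul1r // pnatr_eq0 addnS.
Qed.

Lemma recip_bin_closedS p q : (0 < p)%N ->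
  p%:R * recip_bin_closed p q.+1 + q.+1%:R * recip_bin_closed p.+1 q = 2 ^+ q.+1.
Proof.
move=> p_gt0; rewrite /recip_bin_closed addSnnS; set n := (p + q.+1)%N.
have binS_p : (p.+1 * 'C(n, p.+1) = q.+1 * 'C(n, p))%N by rewrite mul_bin_left addKn.
have bin_q : 'C(n, q.+1) = 'C(n, p) by rewrite -[in LHS](addKn p q.+1) bin_sub ?leq_addr.
have bin_gt0 : ('C(n, p)%:R : F) != 0 by rewrite pnatr_eq0 -lt0n bin_gt0 leq_addr.
have mulKdiv (x y z : F) : x != 0 -> x * (y / (x * z)) = y / z.
  by move=> x_neq0; rewrite invfM mulrCA mulVKf.
rewrite binS_p !natrM !mulKdiv ?pnatr_eq0 -?lt0n // -mulrDl -rmorphD /=.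
by rewrite neg2_bin_sum_signS bin_q rmorphM rmorphXn /= mulfK.
Qed.

Lemma recip_bin_sumE p q : (0 < p)%N -> recip_bin_sum p q = recip_bin_closed p q.
Proof.
elim: q p => [|q IHq] p p_gt0.
  rewrite /recip_bin_sum /recip_bin_closed /neg2_bin_sum !big_nat1 !addn0.
  by rewrite !binn !bin0 muln1 !mul1r.
have p_neq0 : (p%:R : F) != 0 by rewrite pnatr_eq0 -lt0n.
apply: (mulfI p_neq0); apply: (addIr (q.+1%:R * recip_bin_sum p.+1 q)).
by rewrite recip_bin_sumS // IHq // recip_bin_closedS.
Qed.

End ReciprocalBinomialSum.

Lemma v2_div (n : int) (d : nat) : n != 0 -> (0 < d)%N ->
  v2 (n%:~R / d%:R) = (logn 2 `|n|)%:Z - (logn 2 d)%:Z.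
Proof.
move=> n_neq0 d_gt0; set x : rat := _ / _.
have d_neq0 : (d%:R : rat) != 0 by rewrite pnatr_eq0 -lt0n.
have x_neq0 : x != 0 by rewrite mulf_neq0 ?invr_eq0 ?intr_eq0.
have cross : numq x * d%:Z = n * denq x.
  apply: (@intr_inj rat); rewrite !rmorphM /= numqE /x.
  by rewrite -[d%:~R]/(d%:R : rat) mulrAC divfK.
have := congr1 (logn 2 \o absz) cross.
rewrite /= !abszM /= !lognM ?absz_gt0 ?numq_eq0 ?denq_neq0 //.
by rewrite /v2 -/x; lia.
Qed.

Theorem mainTheorem12 (p q u : nat) :
  (1 <= p)%N ->
  (p <= u <= p + q)%N ->
  (forall w : nat, (p <= w <= p + q)%N -> w != u -> (logn 2 w < logn 2 u)%N) ->
  let S : rat := \sum_(0 <= i < q.+1) ('C(q, i))%:R / (p + i)%:R in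
  S != 0 /\ v2 S = v2 (('C(q, u - p))%:R / u%:R).
Proof.
move=> p_gt0 u_in u_max S; have /andP[le_pu le_uq] := u_in.
have prime2 : prime 2 by [].
have [j u_eq] : exists j, u = (p + j)%N by exists (u - p)%N; rewrite subnKC.
have [m q_eq] : exists m, q = (j + m)%N by exists (q - j)%N; lia.
have [lt_j lt_m] : (j < 2 ^ logn 2 u)%N /\ (m < 2 ^ logn 2 u)%N.
  by case: (logn_argmax_window prime2 p_gt0 u_in u_max); lia.
have val_bin : (logn 2 p + logn 2 'C(p + q, p) + logn 2 'C(q, j) = logn 2 u)%N.
  have := congr1 (logn 2) (mul_bin_window j m p_gt0); rewrite -q_eq -u_eq.
  have dvd_u := pfactor_dvdnn 2 u.
  rewrite !lognM ?muln_gt0 ?bin_gt0 ?(logn_bin_pred_small prime2 dvd_u lt_j)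
    ?(logn_bin_add_small prime2 dvd_u lt_m); lia.
have -> : S = recip_bin_closed rat p q by exact: recip_bin_sumE.
have num_neq0 : (-1) ^+ q * neg2_bin_sum (p + q) q != 0.
  by rewrite mulf_neq0 ?signr_eq0 //; apply: contraTneq (neg2_bin_sum_odd (p + q) q) => ->.
have den_gt0 : (0 < p * 'C(p + q, p))%N by rewrite muln_gt0 p_gt0 bin_gt0 leq_addr.
split; first by rewrite mulf_neq0 ?invr_eq0 ?intr_eq0 ?pnatr_eq0 -?lt0n.
rewrite v2_div // abszMsign logn_coprime ?coprime2n ?neg2_bin_sum_odd //.
have -> : (u - p)%N = j by lia.
have bin_qj_gt0 : (0 < 'C(q, j))%N by rewrite bin_gt0; lia.
rewrite -[('C(q, j)%:R)]/(('C(q, j))%:Z%:~R : rat) v2_div /= ?lognM; lia.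
Qed.
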